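(* Let $0\le\alpha<1$ and let $G$ be a graph on $n$ vertices with minimum degree $\delta\ge 1$. Let $\mathbf{x}=(x_1,\dots,x_n)$ be a non-negative unit eigenvector of $A_\alpha(G)$ corresponding to $\lambda_\alpha(G)$ and $x=\min\{x_1,\dots,x_n\}$. Then $$x^2 \leq \frac{\delta (1-\alpha)^2}{(\lambda_{\alpha}(G)-\alpha \delta)^2+\delta(n-\delta) (1-\alpha)^2}.$$
   Context: $A_\alpha(G)=\alpha D(G)+(1-\alpha)A(G)$, where $A(G)$ is the adjacency matrix and $D(G)$ the diagonal degree matrix; $\lambda_\alpha(G)$ is its largest eigenvalue. *)

From HB Require Import structures.
From mathcomp Require Import all_boot all_order all_algebra.
Set Implicit Arguments. Unset Strict Implicit. Unset Printing Implicit Defensive.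
Import Order.TTheory GRing.Theory Num.Theory.
Local Open Scope ring_scope.

Definition simple_graph (n : nat) (e : rel 'I_n) : Prop :=
  (forall i j, e i j = e j i) /\ (forall i, e i i = false).

Definition deg (n : nat) (e : rel 'I_n) (i : 'I_n) : nat := #|[set j | e i j]|.

Definition is_min_degree (n : nat) (e : rel 'I_n) (delta : nat) : Prop :=
  (exists i, deg e i = delta) /\ (forall i, (delta <= deg e i)%N).

Definition adjmx (R : numDomainType) (n : nat) (e : rel 'I_n) : 'M[R]_n :=
  \matrix_(i, j) (e i j)%:R.
Definition degmx (R : numDomainType) (n : nat) (e : rel 'I_n) : 'M[R]_n :=
  diag_mx (\row_i (deg e i)%:R).

Definition Aalpha (R : numDomainType) (n : nat) (alpha : R) (e : rel 'I_n) : 'M[R]_n :=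
  alpha *: degmx R e + (1 - alpha) *: adjmx R e.

Definition is_largest_eigenvalue (R : realFieldType) (n : nat) (M : 'M[R]_n) (lam : R) : Prop :=
  eigenvalue M lam /\ (forall mu : R, eigenvalue M mu -> mu <= lam).

From HB Require Import structures.
From mathcomp Require Import all_boot all_order all_algebra ring lra.
Import Order.TTheory GRing.Theory Num.Theory.
Local Open Scope ring_scope.

(* Writing
   S for the sum of x over the neighbours of u, that row reads
   (lam - alpha delta) x_u = (1 - alpha) S.  Cauchy-Schwarz bounds S^2 by delta
   times the neighbours' mass, which the unit norm bounds by 1 minus the mass of
   the n - delta non-neighbours (u included), each at least x^2.  Combined with
   x <= x_u this is the claimed inequality after clearing the denominator. *)

Lemma sqr_sum_le_card_sum_sqr (R : realFieldType) (I : finType) (P : {pred I})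
    (f : I -> R) :
  (\sum_(i in P) f i) ^+ 2 <= #|P|%:R * \sum_(i in P) f i ^+ 2.
Proof.
set S := \sum_(i in P) f i; set T := \sum_(i in P) f i ^+ 2; set k : R := #|P|%:R.
have sum_sqr_ge0 : 0 <= \sum_(i in P) (k * f i - S) ^+ 2.
  by apply: sumr_ge0 => i _; exact: sqr_ge0.
have expand : \sum_(i in P) (k * f i - S) ^+ 2 = k * (k * T - S ^+ 2).
  under eq_bigr do rewrite sqrrB exprMn.
  rewrite big_split /= sumrB sumr_const -mulr_sumr -/T sumrMnl -mulr_suml.
  by rewrite (mulrC k) -mulr_sumr -/S -mulr_natr; ring.
rewrite expand in sum_sqr_ge0.
have [k_gt0 | k_eq0] := ltrP 0 k.
  by rewrite -subr_ge0 -(pmulr_rge0 _ k_gt0).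
have /card0_eq P0 : #|P| = 0%N by apply/eqP; rewrite -leqn0 -(ler_nat R).
by rewrite /S /T !big_pred0 // expr0n mulr0.
Qed.

Lemma Aalpha_mulmx_row (R : numDomainType) (n : nat) (e : rel 'I_n) (alpha : R)
    (x : 'cV[R]_n) (u : 'I_n) :
  (Aalpha alpha e *m x) u 0 =
    alpha * (deg e u)%:R * x u 0 + (1 - alpha) * \sum_(j in [set j | e u j]) x j 0.
Proof.
rewrite !mxE (eq_bigr (fun j => alpha * (deg e u)%:R * ((u == j)%:R * x j 0)
                          + (1 - alpha) * ((e u j)%:R * x j 0))); last first.
  move=> j _; rewrite !mxE mulrnAr.
  by case: (u =P j) => [<-|_]; rewrite ?mulr1n ?mulr0n; ring.
rewrite big_split -!mulr_sumr (bigD1 u) //= big1 ?addr0 ?eqxx ?mul1r; last first.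
  by move=> j /negPf; rewrite eq_sym => ->; rewrite mul0r.
congr (_ + _ * _); rewrite [RHS]big_mkcond; apply: eq_bigr => j _.
by rewrite inE; case: (e u j); rewrite ?mul1r ?mul0r.
Qed.

Lemma card_non_neighbours_gt0 (n : nat) (e : rel 'I_n) (u : 'I_n) :
  e u u = false -> (0 < #|~: [set j | e u j]|)%N.
Proof. by move=> e_uu; apply/card_gt0P; exists u; rewrite in_setC inE e_uu. Qed.

Lemma sum_sqr_le_1_sub_compl (R : realFieldType) (n : nat) (P : {set 'I_n})
    (x : 'I_n -> R) (xmin : R) :
  0 <= xmin -> (forall i, xmin <= x i) -> \sum_(i < n) x i ^+ 2 = 1 ->
  \sum_(i in P) x i ^+ 2 <= 1 - #|~: P|%:R * xmin ^+ 2.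
Proof.
move=> xmin_ge0 xmin_le sum1.
have split_sum : \sum_(i in P) x i ^+ 2 + \sum_(i in ~: P) x i ^+ 2 = 1.
  rewrite -sum1 [RHS](bigID (mem P)); congr (_ + _).
  by apply: eq_bigl => i; rewrite in_setC.
have : #|~: P|%:R * xmin ^+ 2 <= \sum_(i in ~: P) x i ^+ 2.
  rewrite mulr_natl -sumr_const; apply: ler_sum => i _.
  by rewrite lerXn2r ?nnegrE // (le_trans xmin_ge0).
lra.
Qed.

Lemma sqr_le_of_row_bounds (R : realFieldType) (a b d c y S T m : R) :
  0 < b -> 1 <= d -> 1 <= c -> 0 <= m -> m <= y ->
  a * y = b * S -> S ^+ 2 <= d * T -> T <= 1 - c * m ^+ 2 ->
  m ^+ 2 <= d * b ^+ 2 / (a ^+ 2 + d * c * b ^+ 2).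
Proof.
move=> b_gt0 d_ge1 c_ge1 m_ge0 m_le_y eq_row cs mass.
have dcb_gt0 : 0 < d * c * b ^+ 2 by rewrite !mulr_gt0 ?exprn_gt0 // (lt_le_trans ltr01).
have a2_ge0 := sqr_ge0 a.
rewrite ler_pdivlMr; last by lra.
have : a ^+ 2 * m ^+ 2 <= b ^+ 2 * (d * (1 - c * m ^+ 2)).
  have m2_le : m ^+ 2 <= y ^+ 2 by rewrite lerXn2r ?nnegrE // (le_trans m_ge0).
  apply: le_trans (ler_wpM2l a2_ge0 m2_le) _.
  rewrite -exprMn eq_row exprMn ler_wpM2l ?sqr_ge0 //.
  by apply: le_trans cs _; rewrite ler_wpM2l // (le_trans ler01).
by move=> h; rewrite mulrDr; lra.
Qed.

Theorem lemma5p3 (R : realFieldType) (n : nat) (e : rel 'I_n) (alpha : R)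
  (delta : nat) (lam : R) (x : 'cV[R]_n) (xmin : R) :
  0 <= alpha -> alpha < 1 ->
  simple_graph e ->
  is_min_degree e delta -> (1 <= delta)%N ->
  is_largest_eigenvalue (Aalpha alpha e) lam ->
  Aalpha alpha e *m x = lam *: x ->
  (forall i, 0 <= x i 0) ->
  \sum_(i < n) x i 0 ^+ 2 = 1 ->
  (exists i, x i 0 = xmin) -> (forall i, xmin <= x i 0) ->
  xmin ^+ 2 <= delta%:R * (1 - alpha) ^+ 2 /
     ((lam - alpha * delta%:R) ^+ 2 + delta%:R * (n - delta)%:R * (1 - alpha) ^+ 2).
Proof.
move=> _ alpha_lt1 [_ e_irr] [[u deg_u] _] delta_ge1 _ eigen x_ge0 x_unit
  [i0 <-] xmin_le.
set P := [set j | e u j].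
have card_P : #|P| = delta by [].
have card_nonP : (n - delta)%N = #|~: P|.
  by have := cardsC P; rewrite card_ord card_P => n_eq; rewrite -[in LHS]n_eq addKn.
have row := congr1 (fun M : 'cV[R]_n => M u 0) eigen.
rewrite /= Aalpha_mulmx_row mxE deg_u in row.
rewrite card_nonP; apply: (@sqr_le_of_row_bounds _ _ _ _ _ (x u 0)
  (\sum_(j in P) x j 0) (\sum_(j in P) x j 0 ^+ 2)).
- by rewrite subr_gt0.
- by rewrite ler1n.
- by rewrite ler1n card_non_neighbours_gt0.
- exact: x_ge0.
- exact: xmin_le.
- by rewrite mulrBl -row; ring.
- by rewrite -card_P sqr_sum_le_card_sum_sqr.
- exact: sum_sqr_le_1_sub_compl.
Qed.
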